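(* Let $X \in \Lambda^2_{14} = \mathfrak{g}_2$ and let $u, v, y \in \mathbb{R}^7$ be mutually orthogonal. Then $$ X(u \times y, v \times y) = |y|^2 X(u,v) + X(y, (u \times v) \times y). $$
   Context: Equip $\mathbb{R}^7$ with its standard inner product and basis. Let $\varphi = e_{123} - e_{167} - e_{527} - e_{563} - e_{415} - e_{426} - e_{437}$ ($e_{ijk} = e_i\wedge e_j \wedge e_k$) and define the cross product by $\langle u\times v, w\rangle = \varphi(u,v,w)$. A skew bilinear form $X$ is identified with the operator $X$ given by $X(u,v) = \langle X(u),v\rangle$. $\Lambda^2_{14} = \mathfrak{g}_2$ is the set of skew bilinear forms $X$ on $\mathbb{R}^7$ such that $X(v\times w) = X(v)\times w + v \times X(w)$ for all $v,w$ (equivalently $X(u, v\times w) + X(v, w\times u) + X(w, u \times v) = 0$ for all $u,v,w$). *)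

From mathcomp Require Import all_boot all_order all_algebra.
From mathcomp Require Import reals.
Set Implicit Arguments. Unset Strict Implicit. Unset Printing Implicit Defensive.
Import Order.TTheory GRing.Theory Num.Theory.
Local Open Scope ring_scope.

Section G2.
Variable R : realType.
Notation vec := 'rV[R]_7.

(* coordinate i (1-based, as in the paper) of a vector *)
Definition coord (u : vec) (i : nat) : R := u ord0 (inord i.-1).

Definition dot (u v : vec) : R := \sum_(i < 7) u ord0 i * v ord0 i.

(* e_{ijk} = e_i /\ e_j /\ e_k evaluated on (u,v,w): the 3x3 determinant *)
Definition e3 (i j k : nat) (u v w : vec) : R :=
  coord u i * (coord v j * coord w k - coord v k * coord w j)
  - coord u j * (coord v i * coord w k - coord v k * coord w i)
  + coord u k * (coord v i * coord w j - coord v j * coord w i).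

Definition phi (u v w : vec) : R :=
  e3 1 2 3 u v w - e3 1 6 7 u v w - e3 5 2 7 u v w - e3 5 6 3 u v w
  - e3 4 1 5 u v w - e3 4 2 6 u v w - e3 4 3 7 u v w.

(* cross product: <u x v, w> = phi(u,v,w), i.e. (u x v)_k = phi(u,v,e_k) *)
Definition cross (u v : vec) : vec :=
  \row_(k < 7) phi u v (delta_mx ord0 k).

(* a bilinear form on R^7 is represented by its matrix X: X(u,v) = u X v^T *)
Definition bform (X : 'M[R]_7) (u v : vec) : R := (u *m X *m v^T) ord0 ord0.

Definition skew (X : 'M[R]_7) : Prop := X^T = - X.

(* the associated operator: <X(u), v> = X(u,v), i.e. X(u) = u X *)
Definition op (X : 'M[R]_7) (u : vec) : vec := u *m X.

Definition in_g2 (X : 'M[R]_7) : Prop :=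
  skew X /\
  forall v w : vec, op X (cross v w) = cross (op X v) w + cross v (op X w).

End G2.

From mathcomp Require Import all_boot all_order all_algebra.
From mathcomp Require Import reals ring.
Import GRing.Theory.
Local Open Scope ring_scope.

(* Since X is a derivation of the cross product, X(u x y) = Xu x y + u x Xy.
   Pairing with v x y, the first term is handled by the identity
   <a x y, b x y> = <a, b> |y|^2 - <a, y> <b, y>, and the second by its
   polarisation, which for mutually orthogonal u, v, y moves the cross products
   across: <u x w, v x y> = <w, (u x v) x y>.  Both identities are polynomial
   identities in the coordinates. *)

Section CrossProduct.
Variable R : realType.
Implicit Types a b c u v w y : 'rV[R]_7.

Lemma dotE a b :
  dot a b = coord a 1 * coord b 1 + coord a 2 * coord b 2 + coord a 3 * coord b 3
          + coord a 4 * coord b 4 + coord a 5 * coord b 5 + coord a 6 * coord b 6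
          + coord a 7 * coord b 7.
Proof.
rewrite /dot 7!big_ord_recl big_ord0 addr0 !addrA /coord.
by congr (_ + _ + _ + _ + _ + _ + _); congr (_ * _); congr (_ _ _);
  apply/val_inj; rewrite /= inordK.
Qed.

Lemma dotDl a b c : dot (a + b) c = dot a c + dot b c.
Proof. by rewrite /dot -big_split; apply: eq_bigr => i _; rewrite mxE mulrDl. Qed.

Lemma bform_dot (X : 'M[R]_7) a b : bform X a b = dot (op X a) b.
Proof. by rewrite /bform /dot /op mxE; apply: eq_bigr => i _; rewrite [b^T _ _]mxE. Qed.

Lemma coord_delta (j k : nat) : (0 < j < 8)%N -> (0 < k < 8)%N ->
  coord (delta_mx ord0 (inord k.-1) : 'rV[R]_7) j = (k == j)%:R.
Proof.
case: j => [|j]; case: k => [|k] //= hj hk.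
by rewrite /coord mxE eqxx -(inj_eq val_inj) /= !inordK // eq_sym eqSS.
Qed.

Lemma coord_cross a b (k : nat) :
  coord (cross a b) k = phi a b (delta_mx ord0 (inord k.-1)).
Proof. by rewrite /coord mxE. Qed.

Ltac cross_coord := rewrite coord_cross /phi /e3 !coord_delta //=; ring.

Lemma coord_cross1 a b : coord (cross a b) 1 =
    (coord a 2 * coord b 3 - coord a 3 * coord b 2)
  + (coord a 4 * coord b 5 - coord a 5 * coord b 4)
  - (coord a 6 * coord b 7 - coord a 7 * coord b 6).
Proof. by cross_coord. Qed.

Lemma coord_cross2 a b : coord (cross a b) 2 =
  - (coord a 1 * coord b 3 - coord a 3 * coord b 1)
  + (coord a 4 * coord b 6 - coord a 6 * coord b 4)
  + (coord a 5 * coord b 7 - coord a 7 * coord b 5).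
Proof. by cross_coord. Qed.

Lemma coord_cross3 a b : coord (cross a b) 3 =
    (coord a 1 * coord b 2 - coord a 2 * coord b 1)
  + (coord a 4 * coord b 7 - coord a 7 * coord b 4)
  - (coord a 5 * coord b 6 - coord a 6 * coord b 5).
Proof. by cross_coord. Qed.

Lemma coord_cross4 a b : coord (cross a b) 4 =
  - (coord a 1 * coord b 5 - coord a 5 * coord b 1)
  - (coord a 2 * coord b 6 - coord a 6 * coord b 2)
  - (coord a 3 * coord b 7 - coord a 7 * coord b 3).
Proof. by cross_coord. Qed.

Lemma coord_cross5 a b : coord (cross a b) 5 =
    (coord a 1 * coord b 4 - coord a 4 * coord b 1)
  - (coord a 2 * coord b 7 - coord a 7 * coord b 2)
  + (coord a 3 * coord b 6 - coord a 6 * coord b 3).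
Proof. by cross_coord. Qed.

Lemma coord_cross6 a b : coord (cross a b) 6 =
    (coord a 1 * coord b 7 - coord a 7 * coord b 1)
  + (coord a 2 * coord b 4 - coord a 4 * coord b 2)
  - (coord a 3 * coord b 5 - coord a 5 * coord b 3).
Proof. by cross_coord. Qed.

Lemma coord_cross7 a b : coord (cross a b) 7 =
  - (coord a 1 * coord b 6 - coord a 6 * coord b 1)
  + (coord a 2 * coord b 5 - coord a 5 * coord b 2)
  + (coord a 3 * coord b 4 - coord a 4 * coord b 3).
Proof. by cross_coord. Qed.

Definition coord_crossE :=
  (coord_cross1, coord_cross2, coord_cross3, coord_cross4,
   coord_cross5, coord_cross6, coord_cross7).

Lemma dot_cross_crossr a b y :
  dot (cross a y) (cross b y) = dot a b * dot y y - dot a y * dot b y.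
Proof. by rewrite !dotE !coord_crossE; ring. Qed.

Lemma dot_cross_cross u v w y :
  dot (cross u w) (cross v y) = dot w (cross (cross u v) y)
    + dot u v * dot w y - 2 * (dot u y * dot w v) + dot u w * dot v y.
Proof. by rewrite !dotE !coord_crossE; ring. Qed.

End CrossProduct.

Theorem proposition2p1 (R : realType) (X : 'M[R]_7) (u v y : 'rV[R]_7) :
  in_g2 X ->
  dot u v = 0 -> dot u y = 0 -> dot v y = 0 ->
  bform X (cross u y) (cross v y) =
    dot y y * bform X u v + bform X y (cross (cross u v) y).
Proof.
move=> [_ X_der] uv0 uy0 vy0.
rewrite !bform_dot X_der dotDl dot_cross_crossr dot_cross_cross.
by rewrite uv0 uy0 vy0 !(mulr0, mul0r, subr0, addr0) mulrC.
Qed.
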